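(* Let $\vartheta$ be a primitive semi-compatible random substitution with topological entropy $s$, and suppose $\mathcal P(q)\neq\varnothing$ for at least one $q\in\mathbb N$. Then \[ s=\limsup_{q\to\infty}\frac1q\log(\#\mathcal P(q)). \]
   Context: Let $\mathcal A=\{a_1,\dots,a_n\}$ be a finite alphabet. A random substitution is a map $\vartheta$ from $\mathcal A$ to finite non-empty sets of finite non-empty words, extended to words by $\vartheta(u_1\cdots u_m)=\{w_1\cdots w_m: w_k\in\vartheta(u_k)\}$ and to sets of words by unions; powers $\vartheta^m$ are compositions. $\vartheta$ is semi-compatible if for each $a$ all words in $\vartheta(a)$ have the same vector of letter counts; the substitution matrix $M_{ij}$ is the number of $a_i$ in any word of $\vartheta(a_j)$; primitive means $M$ is a primitive matrix. The language $\mathcal L$ is the set of all subwords (contiguous factors) of words in $\vartheta^m(a)$, $a\in\mathcal A$, $m\in\mathbb N$; $\mathcal L_\ell$ its words of length $\ell$; $s=\lim_{\ell\to\infty}\frac1\ell\log\#\mathcal L_\ell$. The set of periodic words of period $q$ is $\mathcal P(q)=\{u\in\mathcal L: |u|=q,\ u^N\in\mathcal L\text{ for all }N\in\mathbb N\}$, where $u^N$ is the $N$-fold concatenation of $u$. *)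

From Stdlib Require Import Reals ClassicalEpsilon.
From mathcomp Require Import all_boot.

Set Implicit Arguments.
Unset Strict Implicit.
Unset Printing Implicit Defensive.

Definition pb (P : Prop) : bool :=
  if excluded_middle_informative P then true else false.

Section RandSubst.
Variable A : finType.

(* A random substitution: each letter is sent to a finite set of words,
   represented by a list of words (duplicates irrelevant). *)
Definition rsubst := A -> seq (seq A).

Definition is_random_substitution (theta : rsubst) : Prop :=
  forall a : A, theta a <> [::] /\ forall w, w \in theta a -> w <> [::].

Definition in_subst (theta : rsubst) (u w : seq A) : Prop :=
  exists ws : seq (seq A),
    size ws = size u /\ all2 (fun (a : A) (v : seq A) => v \in theta a) u ws
    /\ w = flatten ws.

Fixpoint in_subst_pow (theta : rsubst) (m : nat) (u w : seq A) : Prop :=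
  match m with
  | 0 => w = u
  | m'.+1 => exists v, in_subst theta u v /\ in_subst_pow theta m' v w
  end.

Definition in_lang (theta : rsubst) (w : seq A) : Prop :=
  exists (a : A) (m : nat) (v : seq A), in_subst_pow theta m [:: a] v /\ infix w v.

Definition semi_compatible (theta : rsubst) : Prop :=
  forall (a : A) (v w : seq A), v \in theta a -> w \in theta a ->
    forall b : A, count_mem b v = count_mem b w.

(* substitution matrix M_{b a} = number of b in (any) word of theta(a) *)
Definition subst_matrix (theta : rsubst) (b a : A) : nat :=
  count_mem b (head [::] (theta a)).

Fixpoint mat_pow (M : A -> A -> nat) (k : nat) (i j : A) : nat :=
  match k with
  | 0 => nat_of_bool (i == j)
  | k'.+1 => \sum_(l : A) M i l * mat_pow M k' l j
  end.

Definition primitive_matrix (M : A -> A -> nat) : Prop :=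
  exists k : nat, 0 < k /\ forall i j : A, 0 < mat_pow M k i j.

Definition primitive_subst (theta : rsubst) : Prop :=
  primitive_matrix (subst_matrix theta).

Definition card_lang (theta : rsubst) (l : nat) : nat :=
  #|[set t : l.-tuple A | pb (in_lang theta (tval t))]|.

Definition wpow (u : seq A) (N : nat) : seq A := flatten (nseq N u).

Definition card_periodic (theta : rsubst) (q : nat) : nat :=
  #|[set t : q.-tuple A |
      pb (in_lang theta (tval t) /\ forall N : nat, in_lang theta (wpow (tval t) N))]|.

End RandSubst.

(* limsup of an extended-real sequence (None = -infinity) equals the real l *)
Definition is_limsup (u : nat -> option R) (l : R) : Prop :=
  (forall eps : R, Rlt 0 eps ->
     exists N : nat, forall n : nat, (N <= n)%coq_nat ->
       forall x : R, u n = Some x -> Rlt x (Rplus l eps)) /\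
  (forall eps : R, Rlt 0 eps ->
     forall N : nat, exists n : nat, (N <= n)%coq_nat /\
       exists x : R, u n = Some x /\ Rlt (Rminus l eps) x).

(* q |-> (1/q) log #P(q), with log 0 = -infinity *)
Definition periodic_growth (A : finType) (theta : rsubst A) (q : nat) : option R :=
  if card_periodic theta q == 0 then None
  else Some (Rdiv (ln (INR (card_periodic theta q))) (INR q)).

(** Applying [theta^m] to a legal word [v] all of whose powers are legal
    yields words with the same property, of length [|theta^m(v)|]; hence
    [#P(|theta^m(v)|) >= #theta^m(v)].  Semi-compatibility makes the lengths
    [|theta^m(a)|] deterministic and [#theta^m(v)] multiplicative over the
    letters of [v], so the lower bound reduces to
    [log #theta^m(a) >= (s - e) |theta^m(a)|] for every letter [a] and all
    large [m].  The upper bound is just [P(q) ⊆ L_q].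

    The per-letter estimate comes in two steps.  First, some letter is good:
    every legal word of length [l] is a window of [theta^m(y)] for a word [y]
    of length about [l / min_a |theta^m(a)|] with overhang below
    [max_a |theta^m(a)|], so if [log #theta^m(b) <= (s - d) |theta^m(b)|] held
    for all [b], then [#L_l] would grow with rate below [s].  Second, the
    deficit [s |theta^m(a)| - log #theta^m(a)] is subadditive along
    [theta^j], and by primitivity the good letter occurs in every
    [theta^k(c)]; hence the worst deficit ratio contracts geometrically
    towards [2d]. *)

From Stdlib Require Import Reals ClassicalEpsilon Classical Psatz.
From mathcomp Require Import all_boot zify.

Set Implicit Arguments.
Unset Strict Implicit.
Unset Printing Implicit Defensive.

Lemma pbP (P : Prop) : pb P -> P.
Proof. by rewrite /pb; case: excluded_middle_informative. Qed.

Lemma pbT (P : Prop) : P -> pb P.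
Proof. by rewrite /pb; case: excluded_middle_informative. Qed.

Lemma size_flatten_const (T U : Type) (f : T -> seq U) (s : seq T) c :
  (forall x, size (f x) = c) -> size (flatten [seq f x | x <- s]) = size s * c.
Proof. by move=> H; elim: s => [|x s IH] //=; rewrite size_cat IH H mulSn. Qed.

Section RealFacts.
Local Open Scope R_scope.

Lemma Nat_powE a b : Nat.pow a b = expn a b.
Proof. by elim: b => [|b IH] //=; rewrite expnS IH. Qed.

Lemma INR_muln (x y : nat) : INR (x * y)%N = INR x * INR y.
Proof. exact: mult_INR. Qed.

Lemma INR_addn (x y : nat) : INR (x + y)%N = INR x + INR y.
Proof. exact: plus_INR. Qed.

Lemma INR_leq (x y : nat) : (x <= y)%N -> INR x <= INR y.
Proof. by move/leP; apply: le_INR. Qed.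

Lemma INR_gt0 (x : nat) : (0 < x)%N -> 0 < INR x.
Proof. by move/ltP; apply: lt_0_INR. Qed.

Lemma exp_le x y : x <= y -> exp x <= exp y.
Proof.
case/Rle_lt_or_eq_dec => [H|->]; last exact: Rle_refl.
exact: Rlt_le (exp_increasing _ _ H).
Qed.

Lemma ln_le x y : 0 < x -> x <= y -> ln x <= ln y.
Proof.
move=> Hx; case/Rle_lt_or_eq_dec => [H|<-]; last exact: Rle_refl.
by apply: Rlt_le; apply: ln_increasing.
Qed.

Lemma ln_ge0 x : 1 <= x -> 0 <= ln x.
Proof. by move=> Hx; rewrite -ln_1; apply: ln_le => //; lra. Qed.

Lemma ln_le_sub1 x : 0 < x -> ln x <= x - 1.
Proof. by move=> Hx; have := exp_ineq1_le (ln x); rewrite exp_ln //; lra. Qed.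

(* [ln] is junk ([0]) at [0], so a positive logarithm forces a positive argument. *)
Lemma gt0_of_ln_gt0 x : 0 <= x -> 0 < ln x -> 0 < x.
Proof.
case/Rle_lt_or_eq_dec => // <-.
by rewrite /ln; case: Rlt_dec => [H|_]; [case: (Rlt_irrefl _ H) | lra].
Qed.

Lemma Rlt_mul_of_lt_div x y z : 0 < z -> x < y / z -> x * z < y.
Proof.
move=> Hz H; have := Rmult_lt_compat_r z _ _ Hz H.
by rewrite /Rdiv Rmult_assoc Rinv_l ?Rmult_1_r //; lra.
Qed.

Lemma Rlt_mul_of_div_lt x y z : 0 < z -> x / z < y -> x < y * z.
Proof.
move=> Hz H; have := Rmult_lt_compat_r z _ _ Hz H.
by rewrite /Rdiv Rmult_assoc Rinv_l ?Rmult_1_r //; lra.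
Qed.

Lemma Rle_div_of_mul_le x y z : 0 < z -> x * z <= y -> x <= y / z.
Proof.
move=> Hz H; have := Rmult_le_compat_r (/ z) _ _ (Rlt_le _ _ (Rinv_0_lt_compat _ Hz)) H.
by rewrite Rmult_assoc Rinv_r ?Rmult_1_r //; lra.
Qed.

Fixpoint sumR (T : Type) (f : T -> R) (r : seq T) : R :=
  if r is x :: r' then f x + sumR f r' else 0.

Lemma sumR_cat (T : Type) (f : T -> R) r1 r2 : sumR f (r1 ++ r2) = sumR f r1 + sumR f r2.
Proof. by elim: r1 => [|x r1 IH] /=; [lra | rewrite IH; lra]. Qed.

Lemma sumR_le (T : Type) (f g : T -> R) r : (forall x, f x <= g x) -> sumR f r <= sumR g r.
Proof. by move=> H; elim: r => [|x r IH] /=; [lra | have := H x; lra]. Qed.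

Lemma sumR_scale (T : Type) (f : T -> R) (al : R) r :
  sumR (fun x => al * f x) r = al * sumR f r.
Proof. by elim: r => [|x r IH] /=; [ring | rewrite IH; ring]. Qed.

Lemma INR_sumn_le (T : eqType) (f : T -> nat) (r : seq T) B :
  (forall x, x \in r -> INR (f x) <= B) -> INR (sumn [seq f x | x <- r]) <= INR (size r) * B.
Proof.
elim: r => [|x r IH] H; first by rewrite /= Rmult_0_l; lra.
rewrite map_cons [sumn _]/= [size _]/= INR_addn S_INR.
have := H x (mem_head _ _).
have : INR (sumn [seq f y | y <- r]) <= INR (size r) * B.
  by apply: IH => y Hy; apply: H; rewrite inE Hy orbT.
lra.
Qed.

(* Where the constants come from: with [l = n a] letters, overhang [K a] and
   [n + 2K] short preimage words, dividing the counting bound by [a] leaves a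
   gain [d n / 2] against [O(K)] boundary terms. *)
Lemma counting_bound_absurd (d s c n a K : R) :
  0 < d -> d < s -> 1 <= a -> 1 <= K -> 0 <= c -> 4 * c < d * a ->
  3 * K + 6 * K / d + 12 * s * K / d < n ->
  (s - d / 4) * (n * a) < (n + 2 * K) * c + K * a + (s - d) * (n * a + 2 * (K * a)) ->
  False.
Proof.
move=> Hd Hds Ha HK Hc Hca Hn H.
have Hnd : 3 * K * d + 6 * K + 12 * s * K < n * d.
  have := Rmult_lt_compat_r d _ _ Hd Hn.
  have -> : (3 * K + 6 * K / d + 12 * s * K / d) * d = 3 * K * d + 6 * K + 12 * s * K.
    by field; lra.
  lra.
have Hc2 : (n + 2 * K) * c <= (n + 2 * K) * (d * a / 4) by apply: Rmult_le_compat_l; nra.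
have Hgap : d / 2 * n * a < (d * K / 2 + K + 2 * s * K) * a by nra.
have : d / 2 * n < d * K / 2 + K + 2 * s * K by apply: (Rmult_lt_reg_r a); lra.
nra.
Qed.

Lemma mix_step_ineq (D1 Db D2 L1 Lb L2 E d mu : R) :
  D1 <= E * L1 -> Db < d * Lb -> D2 <= E * L2 ->
  (E - d) * (mu * (L1 + (Lb + L2))) <= (E - d) * Lb ->
  D1 + (Db + D2) <= (E - mu * (E - d)) * (L1 + (Lb + L2)).
Proof. by move=> *; nra. Qed.

End RealFacts.

Lemma card_periodic_le (A : finType) (theta : rsubst A) q :
  (card_periodic theta q <= card_lang theta q)%N.
Proof.
apply: subset_leq_card; apply/subsetP => t; rewrite !inE => /pbP [H _].
exact: pbT.
Qed.

Section UpperBound.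
Local Open Scope R_scope.

Lemma periodic_growth_eventually_lt (A : finType) (theta : rsubst A) (s : R) :
  Un_cv (fun l : nat => Rdiv (ln (INR (card_lang theta l.+1))) (INR l.+1)) s ->
  forall eps : R, 0 < eps ->
     exists N : nat, forall n : nat, (N <= n)%coq_nat ->
       forall x : R, periodic_growth theta n = Some x -> x < s + eps.
Proof.
move=> Hs eps He; have [N0 HN0] := Hs eps He.
exists N0.+1 => -[|n] /leP // Hn x.
rewrite /periodic_growth; case: eqP => // HP [<-].
have /Rabs_def2 [HL _] := HN0 n (elimT leP (Hn : (N0 <= n)%N)).
have HPpos : (0 < card_periodic theta n.+1)%N by rewrite lt0n; apply/eqP.
have Hln : ln (INR (card_periodic theta n.+1)) <= ln (INR (card_lang theta n.+1)).
  by apply: ln_le; [exact: INR_gt0 | exact: INR_leq (card_periodic_le _ _)].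
have : ln (INR (card_periodic theta n.+1)) / INR n.+1
       <= ln (INR (card_lang theta n.+1)) / INR n.+1.
  by apply: Rmult_le_compat_r => //; apply/Rlt_le/Rinv_0_lt_compat/INR_gt0.
move/Rle_lt_trans; apply; lra.
Qed.

End UpperBound.

Section PrimitiveMatrix.
Variable A : finType.
Variable M : A -> A -> nat.
Variable k : nat.
Hypothesis k_gt0 : 0 < k.
Hypothesis Mk_gt0 : forall i j, 0 < mat_pow M k i j.

Lemma primitive_row_pos b : exists l, 0 < M b l.
Proof.
have := Mk_gt0 b b; case: (pickP (fun l => 0 < M b l)) => [l Hl|H]; first by exists l.
case: k k_gt0 => // k' _ /=.
rewrite big1 // => l _; have := H l; rewrite lt0n => /negbFE/eqP ->.
by rewrite mul0n.
Qed.

Lemma mat_pow_pos i b c : k <= i -> 0 < mat_pow M i b c.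
Proof.
elim: i b c => [|i IH] b c; first by rewrite leqNgt k_gt0.
rewrite leq_eqVlt => /orP [/eqP <-|]; first exact: Mk_gt0.
rewrite ltnS => Hi /=.
have [l Hl] := primitive_row_pos b.
by rewrite (bigD1 l) //= ltn_addr // muln_gt0 Hl IH.
Qed.

End PrimitiveMatrix.

Section Images.
Variable A : finType.
Variable theta : rsubst A.
Hypothesis theta_rs : is_random_substitution theta.
Hypothesis theta_sc : semi_compatible theta.

Definition img1 (u : seq A) : seq (seq A) :=
  foldr (fun a acc => [seq x ++ y | x <- theta a, y <- acc]) [:: [::]] u.

Fixpoint img (m : nat) (u : seq A) : seq (seq A) :=
  match m with
  | 0 => [:: u]
  | m'.+1 => flatten [seq img m' v | v <- img1 u]
  end.

Lemma img1_consP a u w : reflect (exists x y, [/\ x \in theta a, y \in img1 u & w = x ++ y])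
  (w \in img1 (a :: u)).
Proof.
rewrite /=; apply: (iffP allpairsP) => [[[x y] /= [Hx Hy ->]]|[x [y [Hx Hy ->]]]].
  by exists x, y.
by exists (x, y).
Qed.

Lemma mem_img1_nil w : (w \in img1 [::]) = (w == [::]).
Proof. by rewrite /= inE. Qed.

Lemma in_substE u w : in_subst theta u w <-> w \in img1 u.
Proof.
elim: u w => [|a u IH] w.
  rewrite mem_img1_nil; split.
    by move=> [[|z ws] [//= _ [_ ->]]].
  by move/eqP->; exists [::].
split.
  move=> [[|z ws] [//= [Hsize] [/andP [Hz Hall] ->]]].
  apply/img1_consP; exists z, (flatten ws); split=> //.
  by apply/IH; exists ws.
move/img1_consP=> [x [y [Hx /IH [ws [Hsize [Hall ->]]] ->]]].
by exists (x :: ws); rewrite /= Hsize Hx Hall.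
Qed.

Lemma mem_img1_cat u u' w : (exists w1 w2, [/\ w1 \in img1 u, w2 \in img1 u' & w = w1 ++ w2])
   <-> w \in img1 (u ++ u').
Proof.
elim: u w => [|a u IH] w /=.
  split; first by move=> [w1 [w2 [/= ]]]; rewrite inE => /eqP -> H ->.
  by move=> H; exists [::], w; rewrite inE.
split.
  move=> [w1 [w2 [/img1_consP [x [y [Hx Hy ->]]] H2 ->]]].
  apply/img1_consP; exists x, (y ++ w2); rewrite catA; split=> //.
  by apply/IH; exists y, w2.
move/img1_consP=> [x [y [Hx /IH [w1 [w2 [H1 H2 ->]]] ->]]].
exists (x ++ w1), w2; rewrite catA; split=> //.
by apply/img1_consP; exists x, w1.
Qed.

Lemma mem_imgS m u w : w \in img m.+1 u <-> exists v, v \in img1 u /\ w \in img m v.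
Proof.
rewrite /=; split.
  by move/flatten_mapP=> [v Hv Hw]; exists v.
by move=> [v [Hv Hw]]; apply/flatten_mapP; exists v.
Qed.

Lemma in_subst_powE m u w : in_subst_pow theta m u w <-> w \in img m u.
Proof.
elim: m u w => [|m IH] u w /=.
  by rewrite inE; split => [->|/eqP].
rewrite -/(img m.+1 u) mem_imgS; split.
  by move=> [v [/in_substE Hv /IH Hw]]; exists v.
by move=> [v [Hv Hw]]; exists v; split; [apply/in_substE|apply/IH].
Qed.

Lemma mem_img_cat m u u' w : (exists w1 w2, [/\ w1 \in img m u, w2 \in img m u' & w = w1 ++ w2])
   <-> w \in img m (u ++ u').
Proof.
elim: m u u' w => [|m IH] u u' w.
  rewrite /= !inE; split; first by move=> [w1 [w2 []]]; rewrite !inE => /eqP-> /eqP-> ->.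
  by move/eqP->; exists u, u'; rewrite !inE.
rewrite mem_imgS; split.
  move=> [w1 [w2 [/mem_imgS [v1 [Hv1 Hw1]] /mem_imgS [v2 [Hv2 Hw2]] ->]]].
  exists (v1 ++ v2); split; first by apply/mem_img1_cat; exists v1, v2.
  by apply/IH; exists w1, w2.
move=> [v [/mem_img1_cat [v1 [v2 [H1 H2 ->]]] /IH [w1 [w2 [Hw1 Hw2 ->]]]]].
by exists w1, w2; split => //; apply/mem_imgS; [exists v1|exists v2].
Qed.

Lemma mem_img_add p q u w : w \in img (p + q) u <-> exists v, v \in img p u /\ w \in img q v.
Proof.
elim: p u w => [|p IH] u w.
  rewrite add0n; split; first by move=> H; exists u; rewrite /= inE.
  by move=> [v [/=]]; rewrite inE => /eqP ->.
rewrite addSn !mem_imgS; split.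
  move=> [v [Hv /IH [v' [Hv' Hw]]]]; exists v'; split=> //.
  by apply/mem_imgS; exists v.
move=> [v [/mem_imgS [v' [Hv' Hv]] Hw]]; exists v'; split=> //.
by apply/IH; exists v.
Qed.

Lemma img1_nonempty u : exists w, w \in img1 u.
Proof.
elim: u => [|a u [y Hy]]; first by exists [::].
case: (theta_rs a) => Hne _; case E: (theta a) Hne => [//|x l] _.
by exists (x ++ y); apply/img1_consP; exists x, y; rewrite E inE eqxx.
Qed.

Lemma img_nonempty m u : exists w, w \in img m u.
Proof.
elim: m u => [|m IH] u; first by exists u; rewrite inE.
have [v Hv] := img1_nonempty u; have [w Hw] := IH v.
by exists w; apply/mem_imgS; exists v.
Qed.

Lemma sum_count_mem (f : A -> nat) (u : seq A) :
  \sum_(a <- u) f a = \sum_(c : A) count_mem c u * f c.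
Proof.
elim: u => [|a u IH]; first by rewrite big_nil big1 // => c _; rewrite mul0n.
rewrite big_cons IH.
rewrite [in RHS](eq_bigr (fun c => (a == c) * f c + count_mem c u * f c)); last by move=> c _; rewrite /= mulnDl.
rewrite big_split /=; congr (_ + _).
rewrite (bigD1 a) //= eqxx mul1n big1 ?addn0 // => c /negbTE Hc.
by rewrite eq_sym Hc mul0n.
Qed.

Lemma size_count_mem (w : seq A) : size w = \sum_(b : A) count_mem b w.
Proof.
have := sum_count_mem (fun _ => 1) w.
rewrite sum1_size => ->; by under eq_bigr => c _ do rewrite muln1.
Qed.

Local Notation M := (subst_matrix theta).

Lemma count_mem_theta a x b : x \in theta a -> count_mem b x = M b a.
Proof.
move=> Hx; rewrite /subst_matrix; case: (theta_rs a) => Hne _.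
case E: (theta a) Hne => [//|y l] _ /=.
by apply: (theta_sc Hx); rewrite E inE eqxx.
Qed.

Lemma count_mem_img1 u w b : w \in img1 u -> count_mem b w = \sum_(a <- u) M b a.
Proof.
elim: u w => [|a u IH] w; first by rewrite mem_img1_nil big_nil => /eqP ->.
move/img1_consP=> [x [y [Hx Hy ->]]].
by rewrite count_cat big_cons (count_mem_theta b Hx) (IH _ Hy).
Qed.

Lemma mem_img1 v w : (w \in img 1 v) = (w \in img1 v).
Proof.
apply/idP/idP.
  by move/mem_imgS=> [v' [Hv']]; rewrite /= inE => /eqP ->.
by move=> H; apply/mem_imgS; exists w; rewrite /= inE.
Qed.

Lemma count_mem_img m u w b : w \in img m u ->
  count_mem b w = \sum_(c : A) mat_pow M m b c * count_mem c u.
Proof.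
elim: m w b => [|m IH] w b.
  rewrite /= inE => /eqP ->.
  rewrite (bigD1 b) //= eqxx mul1n big1 ?addn0 // => c /negbTE Hc.
  by rewrite eq_sym Hc.
rewrite -addn1 => /mem_img_add [v [Hv]]; rewrite mem_img1 => Hw.
rewrite (count_mem_img1 b Hw) sum_count_mem.
under eq_bigr => a _ do rewrite (IH _ _ Hv).
under eq_bigr => a _ do rewrite big_distrl /=.
rewrite exchange_big /= addn1; apply: eq_bigr => c _.
rewrite [mat_pow _ m.+1 _ _]/= [RHS]big_distrl /=; apply: eq_bigr => a _.
by rewrite mulnC mulnA.
Qed.

Definition letter_len m (a : A) := \sum_(b : A) mat_pow M m b a.

Definition word_len m (u : seq A) := \sum_(a <- u) letter_len m a.

Lemma size_img m u w : w \in img m u -> size w = word_len m u.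
Proof.
move=> Hw; rewrite size_count_mem /word_len [RHS]sum_count_mem.
under eq_bigr => b _ do rewrite (count_mem_img b Hw).
rewrite exchange_big /=; apply: eq_bigr => c _.
by rewrite /letter_len [RHS]big_distrr /=; apply: eq_bigr => b _; rewrite mulnC.
Qed.

Lemma word_len_cat m u u' : word_len m (u ++ u') = word_len m u + word_len m u'.
Proof. by rewrite /word_len big_cat. Qed.

Lemma word_len1 m a : word_len m [:: a] = letter_len m a.
Proof. by rewrite /word_len big_seq1. Qed.

Lemma size_img_letter m a w : w \in img m [:: a] -> size w = letter_len m a.
Proof. by move/size_img; rewrite word_len1. Qed.

Lemma size_img1_ge u w : w \in img1 u -> size u <= size w.
Proof.
elim: u w => [|a u IH] w //.
move/img1_consP=> [x [y [Hx Hy ->]]].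
case: (theta_rs a) => _ /(_ x Hx); case: x Hx => // z x _ _.
by rewrite /= ltnS size_cat (leq_trans (IH _ Hy)) // leq_addl.
Qed.

Lemma size_img_ge m u w : w \in img m u -> size u <= size w.
Proof.
elim: m u w => [|m IH] u w; first by rewrite /= inE => /eqP ->.
by move/mem_imgS=> [v [Hv Hw]]; apply: leq_trans (size_img1_ge Hv) (IH _ _ Hw).
Qed.

Lemma letter_len_gt0 m a : 0 < letter_len m a.
Proof.
have [w Hw] := img_nonempty m [:: a].
by rewrite -(size_img_letter Hw) (size_img_ge Hw).
Qed.

Definition nimg m u := size (undup (img m u)).

Lemma mem_img_nil m w : (w \in img m [::]) = (w == [::]).
Proof.
apply/idP/eqP.
  by move/size_img; rewrite /word_len big_nil; case: w.
move->; have [w' Hw] := img_nonempty m [::].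
by have := size_img Hw; rewrite /word_len big_nil; case: w' Hw.
Qed.

Lemma nimg_nil m : nimg m [::] = 1.
Proof.
rewrite /nimg; have -> : size (undup (img m [::])) = size [:: [::] : seq A] => //.
apply/perm_size/uniq_perm; rewrite ?undup_uniq // => w.
by rewrite mem_undup mem_img_nil inE.
Qed.

Lemma nimg_cat m u u' : nimg m (u ++ u') = nimg m u * nimg m u'.
Proof.
rewrite /nimg -(size_allpairs cat).
apply/perm_size/uniq_perm; rewrite ?undup_uniq //.
  apply: allpairs_uniq; rewrite ?undup_uniq //.
  move=> [x y] [x' y'] /allpairsP [[x1 y1] /= [Hx1 Hy1 [-> ->]]].
  move=> /allpairsP [[x2 y2] /= [Hx2 Hy2 [-> ->]]] /= /eqP.
  rewrite mem_undup in Hx1; rewrite mem_undup in Hx2.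
  rewrite eqseq_cat; last by rewrite (size_img Hx1) (size_img Hx2).
  by case/andP => /eqP -> /eqP ->.
move=> w; rewrite mem_undup; apply/idP/idP.
  move/mem_img_cat=> [w1 [w2 [H1 H2 ->]]].
  by apply/allpairsP; exists (w1, w2); rewrite !mem_undup.
move/allpairsP=> [[w1 w2] /= [H1 H2 ->]]; rewrite !mem_undup in H1 H2.
by apply/mem_img_cat; exists w1, w2.
Qed.

Lemma nimg_gt0 m u : 0 < nimg m u.
Proof.
have [w Hw] := img_nonempty m u.
by rewrite /nimg lt0n size_eq0; apply/eqP => H; move: Hw; rewrite -mem_undup H.
Qed.

Lemma nimg_le_add j m c r : r \in img j [:: c] -> nimg m r <= nimg (j + m) [:: c].
Proof.
move=> Hr; apply: uniq_leq_size; first exact: undup_uniq.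
by move=> z; rewrite !mem_undup => Hz; apply/mem_img_add; exists r.
Qed.

Lemma letter_len_add p q b r : r \in img p [:: b] -> letter_len (p + q) b = word_len q r.
Proof.
move=> Hr; have [w Hw] := img_nonempty q r.
rewrite -(size_img Hw); apply/esym/size_img_letter/mem_img_add.
by exists r.
Qed.

Lemma letter_len_le_word_len m x r : x \in r -> letter_len m x <= word_len m r.
Proof. by move=> Hx; rewrite /word_len (big_rem x Hx) /= leq_addr. Qed.

Lemma word_len_lb m X r : (forall b, X <= letter_len m b) -> size r * X <= word_len m r.
Proof.
move=> H; elim: r => [|a r IH]; first by rewrite mul0n.
by rewrite /word_len big_cons -/(word_len m r) mulSn leq_add.
Qed.

Lemma word_len_ub m Y r : (forall b, letter_len m b <= Y) -> word_len m r <= size r * Y.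
Proof.
move=> H; elim: r => [|a r IH]; first by rewrite /word_len big_nil.
by rewrite /word_len big_cons -/(word_len m r) mulSn leq_add.
Qed.

Lemma letter_len_lb_add m X : (forall b, X <= letter_len m b) -> forall j c, X <= letter_len (j + m) c.
Proof.
move=> H j c; have [r Hr] := img_nonempty j [:: c].
rewrite (letter_len_add _ Hr); have := size_img_ge Hr.
case: r Hr => // a r _ _; exact: leq_trans (H a) (letter_len_le_word_len _ (mem_head _ _)).
Qed.

Lemma in_langE w : in_lang theta w <->
  exists a m v, v \in img m [:: a] /\ infix w v.
Proof.
split.
  by move=> [a [m [v [/in_subst_powE Hv Hi]]]]; exists a, m, v.
by move=> [a [m [v [Hv Hi]]]]; exists a, m, v; split => //; apply/in_subst_powE.
Qed.

Lemma mem_img_cat3 m u1 u2 u3 x1 x2 x3 : x1 \in img m u1 -> x2 \in img m u2 ->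
  x3 \in img m u3 -> x1 ++ x2 ++ x3 \in img m (u1 ++ u2 ++ u3).
Proof.
move=> H1 H2 H3; apply/mem_img_cat; exists x1, (x2 ++ x3); split => //.
by apply/mem_img_cat; exists x2, x3.
Qed.

Lemma in_lang_img m y z : in_lang theta y -> z \in img m y -> in_lang theta z.
Proof.
move=> /in_langE [a [m' [v [Hv /infixP [s1 [s2 Hvs]]]]]] Hz.
have [z1 H1] := img_nonempty m s1; have [z2 H2] := img_nonempty m s2.
apply/in_langE; exists a, (m' + m), (z1 ++ z ++ z2); split; last exact: infix_infix.
by apply/mem_img_add; exists v; split => //; rewrite Hvs; exact: mem_img_cat3 H1 Hz H2.
Qed.

Lemma wpow_img m v z N : z \in img m v -> wpow z N \in img m (wpow v N).
Proof.
move=> Hz; elim: N => [|N IH]; first by rewrite /wpow /= mem_img_nil.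
by rewrite /wpow /=; apply/mem_img_cat; exists z, (wpow z N).
Qed.

Lemma periodic_img m v z : (forall N, in_lang theta (wpow v N)) ->
  z \in img m v -> in_lang theta z /\ forall N, in_lang theta (wpow z N).
Proof.
move=> Hv Hz.
have HN : forall N, in_lang theta (wpow z N).
  by move=> N; apply: in_lang_img (Hv N) (wpow_img N Hz).
by split => //; have := HN 1; rewrite /wpow /= cats0.
Qed.

Lemma exists_expanding_letter v : 0 < size v -> (forall N, in_lang theta (wpow v N)) ->
  exists b0, 2 <= letter_len 1 b0.
Proof.
move=> Hsz Hv; case: (pickP (fun b => 2 <= letter_len 1 b)) => [b Hb|H]; first by exists b.
exfalso.
have H1 : forall b, letter_len 1 b = 1.
  by move=> b; have := H b; have := letter_len_gt0 1 b; case: (letter_len 1 b) => [|[|]].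
have Hall : forall m b, letter_len m b = 1.
  elim=> [|m IH] b; first by rewrite -(@size_img_letter 0 b [:: b]) // inE.
  have [r Hr] := img_nonempty 1 [:: b].
  rewrite -add1n (letter_len_add _ Hr); have := size_img_letter Hr; rewrite H1.
  by case: r Hr => [|c [|]] //= _ _; rewrite word_len1 IH.
move: (Hv 2) => /in_langE [a [m [x [Hx Hi]]]].
have := size_infix Hi; rewrite (size_img_letter Hx) Hall /wpow /= cats0 size_cat.
by case: (size v) Hsz => // n _; rewrite addSn ltnS addnS.
Qed.

Lemma mem_img_consP m a u x : x \in img m (a :: u) ->
  exists z x'', [/\ z \in img m [:: a], x'' \in img m u & x = z ++ x''].
Proof. by rewrite -cat1s => /mem_img_cat. Qed.

Lemma img_prefix_trim m Lmax : (forall b, letter_len m b <= Lmax) ->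
  forall u x t s2, x \in img m u -> x = t ++ s2 -> t != [::] ->
  exists y x' s2', [/\ x' \in img m y, x' = t ++ s2' & size s2' < Lmax].
Proof.
move=> HL; elim=> [|a u IH] x t s2.
  by rewrite mem_img_nil => /eqP ->; case: t.
move=> /mem_img_consP [z [x'' [Hz Hx'' ->]]] Heq Htn.
have Hzl : size z <= Lmax by rewrite (size_img_letter Hz).
have Htpos : 0 < size t by rewrite lt0n size_eq0.
case: (leqP (size t) (size z)) => Hle.
  exists [:: a], z, (take (size z - size t) s2); split => //.
    have := congr1 (take (size z)) Heq.
    by rewrite take_size_cat // take_cat ltnNge Hle /=.
  rewrite size_take_min; lia.
have Ht : t = z ++ drop (size z) t.
  have := congr1 (take (size z)) Heq.
  rewrite take_size_cat // take_cat Hle => Hz'.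
  by rewrite {1}Hz' cat_take_drop.
have Hx2 : x'' = drop (size z) t ++ s2.
  have := congr1 (drop (size z)) Heq.
  by rewrite drop_size_cat // drop_cat Hle.
have Ht2 : drop (size z) t != [::].
  by rewrite -size_eq0 size_drop; apply/eqP; lia.
have [y [x' [s2' [Hx' Hx'e Hs2]]]] := IH _ _ _ Hx'' Hx2 Ht2.
exists (a :: y), (z ++ x'), s2'; split => //.
  by rewrite -cat1s; apply/mem_img_cat; exists z, x'.
by rewrite Hx'e catA -Ht.
Qed.

Lemma img_factor_trim m Lmax : (forall b, letter_len m b <= Lmax) ->
  forall u x s1 w s2, x \in img m u -> x = s1 ++ w ++ s2 -> w != [::] ->
  exists y x' s1' s2', [/\ x' \in img m y, x' = s1' ++ w ++ s2', size s1' < Lmax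
     & size s2' < Lmax].
Proof.
move=> HL; elim=> [|a u IH] x s1 w s2.
  by rewrite mem_img_nil => /eqP ->; case: s1 => //; case: w.
move=> Hx; move: (Hx) => /mem_img_consP [z [x'' [Hz Hx'' Hxe]]] Heq Hw.
have Hzl : size z <= Lmax by rewrite (size_img_letter Hz).
case: (ltnP (size s1) (size z)) => Hlt.
  have Htn : s1 ++ w != [::] by apply: contra Hw; rewrite -!size_eq0 size_cat addn_eq0 => /andP [].
  have [y [x' [s2' [Hx' Hxe' Hs2]]]] := img_prefix_trim HL Hx (etrans Heq (catA _ _ _)) Htn.
  exists y, x', s1, s2'; split => //; first by rewrite Hxe' catA.
  exact: leq_trans Hlt Hzl.
have Hx2 : x'' = drop (size z) s1 ++ w ++ s2.
  have := congr1 (drop (size z)) (etrans (esym Hxe) Heq).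
  rewrite drop_size_cat // drop_cat.
  case: ltnP => H //.
  have -> : size z = size s1 by apply/eqP; rewrite eqn_leq Hlt H.
  by rewrite subnn drop0 drop_size.
exact: IH Hx'' Hx2 Hw.
Qed.

Fixpoint words (j : nat) : seq (seq A) :=
  match j with
  | 0 => [:: [::]]
  | j'.+1 => [::] :: [seq a :: y | a <- enum A, y <- words j']
  end.

Lemma mem_words j y : size y <= j -> y \in words j.
Proof.
elim: j y => [|j IH] [|a y] //= Hy.
rewrite inE; apply/orP; right; apply/allpairsP; exists (a, y) => /=.
by rewrite mem_enum IH.
Qed.

Lemma size_words j : size (words j) <= (#|A|.+1) ^ j.
Proof.
elim: j => [|j IH] //=.
rewrite size_allpairs -cardE expnS mulSn -addn1 addnC.
by apply: leq_add; [rewrite expn_gt0 | rewrite leq_mul2l IH orbT].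
Qed.

Section Primitive.
Variable k : nat.
Hypothesis k_gt0 : 0 < k.
Hypothesis Mk_gt0 : forall i j, 0 < mat_pow M k i j.

Lemma mem_img_all_letters i c b w : k <= i -> w \in img i [:: c] -> b \in w.
Proof.
move=> Hi Hw; rewrite -has_pred1 has_count (count_mem_img b Hw).
rewrite (bigD1 c) //= eqxx addn0 muln1 ltn_addr //.
exact: (mat_pow_pos k_gt0 Mk_gt0 b c Hi).
Qed.

Definition Kp := \sum_(c : A) letter_len k c.

Lemma letter_len_le_Kp b : letter_len k b <= Kp.
Proof. by rewrite /Kp (bigD1 b) //= leq_addr. Qed.

Lemma Kp_gt0 (b : A) : 0 < Kp.
Proof. exact: leq_trans (letter_len_gt0 k b) (letter_len_le_Kp b). Qed.

Lemma letter_len_ratio m b c : k <= m -> letter_len m b <= Kp * letter_len m c.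
Proof.
move=> Hm; rewrite -(subnKC Hm).
have [r Hr] := img_nonempty k [:: b]; have [r' Hr'] := img_nonempty k [:: c].
rewrite (letter_len_add _ Hr) (letter_len_add _ Hr').
have H : forall x, letter_len (m - k) x <= word_len (m - k) r'.
  by move=> x; apply: letter_len_le_word_len; apply: mem_img_all_letters Hr'.
apply: leq_trans (word_len_ub _ H) _.
by rewrite leq_mul2r (size_img_letter Hr) letter_len_le_Kp orbT.
Qed.

Lemma letter_len_double m X b0 : 2 <= letter_len 1 b0 -> (forall b, X <= letter_len m b) ->
  forall c, 2 * X <= letter_len (k + (1 + m)) c.
Proof.
move=> H2 HX c; have [r Hr] := img_nonempty k [:: c].
rewrite (letter_len_add _ Hr); apply: leq_trans (letter_len_le_word_len _ (mem_img_all_letters b0 (leqnn k) Hr)).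
have [r0 Hr0] := img_nonempty 1 [:: b0].
rewrite (letter_len_add _ Hr0); apply: leq_trans (word_len_lb _ HX).
by rewrite leq_mul2r (size_img_letter Hr0) H2 orbT.
Qed.

Lemma letter_len_unbounded b0 : 2 <= letter_len 1 b0 -> forall X, exists m0, forall m c, m0 <= m -> X <= letter_len m c.
Proof.
move=> H2.
have Hi : forall i c, 2 ^ i <= letter_len (i * (k + 1)) c.
  elim=> [|i IH] c; first by rewrite mul0n letter_len_gt0.
  rewrite mulSn expnS.
  have -> : k + 1 + i * (k + 1) = k + (1 + i * (k + 1)) by rewrite addnA.
  exact: letter_len_double H2 IH c.
move=> X; exists (X * (k + 1)) => m c Hm.
rewrite -(subnK Hm); apply: leq_trans (letter_len_lb_add _ _ _); last first.
  by move=> b; apply: Hi.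
by apply: ltnW; apply: ltn_expl.
Qed.

Lemma in_lang_infix_img w : in_lang theta w -> forall m, exists u x, x \in img m u /\ infix w x.
Proof.
move=> /in_langE [a [m' [v [Hv Hi]]]] m.
have [r Hr] := img_nonempty (k + m) [:: a].
have Ha : a \in r by apply: mem_img_all_letters Hr; rewrite leq_addr.
case/splitPr: r / Ha Hr => r1 r2 Hr.
have [z1 H1] := img_nonempty m' r1; have [z2 H2] := img_nonempty m' r2.
have Hx : z1 ++ v ++ z2 \in img (k + m + m') [:: a].
  by apply/mem_img_add; exists (r1 ++ a :: r2); split => //; rewrite -cat1s; exact: mem_img_cat3 H1 Hv H2.
have : z1 ++ v ++ z2 \in img (k + m' + m) [:: a] by rewrite addnAC.
move/mem_img_add=> [u [_ Hu]]; exists u, (z1 ++ v ++ z2); split => //.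
by apply: infix_catl; apply: infix_catr.
Qed.

Section Windows.
Variables (m l a Lmax J : nat).
Hypothesis l_gt0 : 0 < l.
Hypothesis len_ge_a : forall b, a <= letter_len m b.
Hypothesis len_le_Lmax : forall b, letter_len m b <= Lmax.
Hypothesis J_large : l + 2 * Lmax < J.+1 * a.

(* Every legal word of length [l] is a window of [theta^m(y)] for some word [y]
   of [short_words], starting at an offset below [Lmax]. *)
Definition short_words := [seq y <- words J | word_len m y <= l + 2 * Lmax].

Definition windows (y : seq A) :=
  flatten [seq [seq take l (drop o x) | o <- iota 0 Lmax] | x <- undup (img m y)].

Definition all_windows := flatten [seq windows y | y <- short_words].

Lemma size_all_windows :
  size all_windows = sumn [seq nimg m y * Lmax | y <- short_words].
Proof.
rewrite /all_windows size_flatten /shape -map_comp; congr sumn; apply: eq_map => y /=.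
by rewrite /windows (@size_flatten_const _ _ _ _ Lmax) // => x; rewrite size_map size_iota.
Qed.

Lemma in_lang_all_windows w : size w = l -> in_lang theta w -> w \in all_windows.
Proof.
move=> Hw Hlang.
have [u [x [Hx /infixP [s1 [s2 Hxe]]]]] := in_lang_infix_img Hlang m.
have Hw0 : w != [::] by rewrite -size_eq0 Hw -lt0n.
have [y [x' [s1' [s2' [Hx' Hxe' Hs1 Hs2]]]]] := img_factor_trim len_le_Lmax Hx Hxe Hw0.
have Hlen : word_len m y = size s1' + l + size s2'.
  by rewrite -(size_img Hx') Hxe' !size_cat Hw addnA.
have Hy : y \in short_words.
  rewrite mem_filter Hlen; apply/andP; split; first lia.
  apply: mem_words.
  have := word_len_lb y len_ge_a; rewrite Hlen => H.
  have : size y * a < J.+1 * a by lia.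
  by rewrite ltn_mul2r => /andP [_]; rewrite ltnS.
apply/flatten_mapP; exists y => //.
apply/flatten_mapP; exists x'; first by rewrite mem_undup.
apply/mapP; exists (size s1'); first by rewrite mem_iota.
by rewrite Hxe' drop_size_cat // take_size_cat.
Qed.

Lemma card_lang_le_windows :
  card_lang theta l <= sumn [seq nimg m y * Lmax | y <- short_words].
Proof.
rewrite -size_all_windows /card_lang cardE -(size_map val).
apply: uniq_leq_size; first by rewrite (map_inj_uniq val_inj) enum_uniq.
move=> w /mapP [t]; rewrite mem_enum inE => /pbP Ht ->.
by apply: in_lang_all_windows; rewrite ?size_tuple.
Qed.

Section Exponential.
Local Open Scope R_scope.
Variable beta : R.
Hypothesis beta_ge0 : 0 <= beta.
Hypothesis nimg_le_exp : forall b, INR (nimg m [:: b]) <= exp (beta * INR (letter_len m b)).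

Lemma nimg_le_exp_word y : INR (nimg m y) <= exp (beta * INR (word_len m y)).
Proof.
elim: y => [|b y IH].
  by rewrite nimg_nil /word_len big_nil /= Rmult_0_r exp_0; lra.
rewrite -cat1s nimg_cat word_len_cat word_len1 INR_muln INR_addn Rmult_plus_distr_l exp_plus.
by apply: Rmult_le_compat => //; exact: pos_INR.
Qed.

Lemma card_lang_le_exp :
  INR (card_lang theta l) <= INR #|A|.+1 ^ J * (INR Lmax * exp (beta * INR (l + 2 * Lmax))).
Proof.
apply: Rle_trans (INR_leq card_lang_le_windows) _.
apply: Rle_trans (INR_sumn_le (B := INR Lmax * exp (beta * INR (l + 2 * Lmax))) _) _.
  move=> y; rewrite mem_filter => /andP [Hy _].
  rewrite INR_muln Rmult_comm; apply: Rmult_le_compat_l; first exact: pos_INR.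
  apply: Rle_trans (nimg_le_exp_word y) _.
  by apply: exp_le; apply: Rmult_le_compat_l => //; exact: INR_leq.
apply: Rmult_le_compat_r; first by apply: Rmult_le_pos; [exact: pos_INR | exact/Rlt_le/exp_pos].
rewrite -pow_INR Nat_powE; apply: INR_leq.
by apply: leq_trans (size_words J); rewrite size_filter count_size.
Qed.

Lemma ln_card_lang_le : (0 < Lmax)%N -> 0 < INR (card_lang theta l) ->
  ln (INR (card_lang theta l))
    <= INR J * ln (INR #|A|.+1) + INR Lmax + beta * INR (l + 2 * Lmax).
Proof.
move=> HLmax Hc.
have HLR := INR_gt0 HLmax.
have HE := exp_pos (beta * INR (l + 2 * Lmax)).
have HP : 0 < INR #|A|.+1 ^ J by apply/pow_lt/INR_gt0.
have := ln_le Hc card_lang_le_exp.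
rewrite (ln_mult _ _ HP (Rmult_lt_0_compat _ _ HLR HE)) (ln_mult _ _ HLR HE).
rewrite ln_pow ?ln_exp; last exact: INR_gt0.
by have := ln_le_sub1 HLR; lra.
Qed.

End Exponential.
End Windows.

Section Entropy.
Local Open Scope R_scope.
Variable s : R.
Hypothesis entropy_s :
  Un_cv (fun l : nat => Rdiv (ln (INR (card_lang theta l.+1))) (INR l.+1)) s.

Lemma ln_card_lang_gt e : 0 < e -> exists N, forall l, (N < l)%N ->
  (s - e) * INR l < ln (INR (card_lang theta l)).
Proof.
move=> He; have [N HN] := entropy_s He.
exists N => -[|l] // Hl.
have /Rabs_def2 [_ H] := HN l (elimT leP (Hl : (N <= l)%N)).
by apply: Rlt_mul_of_lt_div; [exact: INR_gt0 | lra].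
Qed.

Definition lenR m x := INR (letter_len m x).
Definition lnimg m x := ln (INR (nimg m [:: x])).
Definition deficit m x := s * lenR m x - lnimg m x.
Definition deficit_le m E := forall b, deficit m b <= E * lenR m b.

Lemma INR_word_len m r : INR (word_len m r) = sumR (lenR m) r.
Proof.
elim: r => [|x r IH]; first by rewrite /word_len big_nil.
by rewrite -cat1s word_len_cat word_len1 INR_addn IH.
Qed.

Lemma lenR_add j m c r : r \in img j [:: c] -> lenR (j + m) c = sumR (lenR m) r.
Proof. by move=> Hr; rewrite /lenR (letter_len_add _ Hr) INR_word_len. Qed.

Lemma nimg_INR_gt0 m r : 0 < INR (nimg m r).
Proof. exact/INR_gt0/nimg_gt0. Qed.

Lemma ln_nimg m r : ln (INR (nimg m r)) = sumR (lnimg m) r.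
Proof.
elim: r => [|x r IH]; first by rewrite nimg_nil /= ln_1.
by rewrite -cat1s nimg_cat INR_muln (ln_mult _ _ (nimg_INR_gt0 _ _) (nimg_INR_gt0 _ _)) IH.
Qed.

Lemma lnimg_ge0 m x : 0 <= lnimg m x.
Proof. exact/ln_ge0/(INR_leq (nimg_gt0 m [:: x])). Qed.

Lemma deficit_split j m c r : r \in img j [:: c] -> deficit (j + m) c <= sumR (deficit m) r.
Proof.
move=> Hr.
have Hln : sumR (lnimg m) r <= lnimg (j + m) c.
  rewrite -ln_nimg; apply: ln_le; first exact: nimg_INR_gt0.
  exact: INR_leq (nimg_le_add _ Hr).
have -> : sumR (deficit m) r = s * sumR (lenR m) r + (-1) * sumR (lnimg m) r.
  by elim: r {Hr Hln} => [|x r IH] /=; [ring | rewrite IH /deficit; ring].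
by rewrite /deficit (lenR_add _ Hr); lra.
Qed.

Lemma deficit_le_add m E : deficit_le m E -> forall j, deficit_le (j + m) E.
Proof.
move=> H j c; have [r Hr] := img_nonempty j [:: c].
apply: Rle_trans (deficit_split m Hr) _.
by rewrite (lenR_add _ Hr) -sumR_scale; exact: sumR_le.
Qed.

Lemma deficit_le_weaken m E E' : deficit_le m E -> E <= E' -> deficit_le m E'.
Proof.
move=> H HE b; apply: Rle_trans (H b) _.
by apply: Rmult_le_compat_r => //; exact: pos_INR.
Qed.

Lemma ln_nimg_ge m E r : deficit_le m E -> (s - E) * INR (word_len m r) <= ln (INR (nimg m r)).
Proof.
move=> HE; rewrite ln_nimg INR_word_len.
elim: r => [|x r IH] /=; first lra.
by have := HE x; rewrite /deficit; lra.
Qed.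

Definition mix_rate := / (INR Kp * INR Kp).

Lemma mix_rate_len_le m b c : (k <= m)%N -> mix_rate * lenR (k + m) c <= lenR m b.
Proof.
move=> Hkm; have [r Hr] := img_nonempty k [:: c].
have Hcmp : (letter_len (k + m) c <= Kp * (Kp * letter_len m b))%N.
  rewrite (letter_len_add _ Hr).
  apply: leq_trans (word_len_ub _ (fun x => letter_len_ratio x b Hkm)) _.
  by rewrite leq_mul2r (size_img_letter Hr) letter_len_le_Kp orbT.
have HK : 1 <= INR Kp by exact: (INR_leq (Kp_gt0 b)).
rewrite /mix_rate; apply: (Rmult_le_reg_l (INR Kp * INR Kp)); first nra.
rewrite -Rmult_assoc Rinv_r; last nra.
by have := INR_leq Hcmp; rewrite !INR_muln /lenR; lra.
Qed.

(* A good letter occurs in every [theta^k(c)] and carries a share of at least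
   [mix_rate] of the length, so it removes that share of the excess over [d]. *)
Lemma deficit_le_mix m E d : (k <= m)%N -> deficit_le m E -> d <= E ->
  (exists b, exp ((s - d) * INR (letter_len m b)) < INR (nimg m [:: b])) ->
  deficit_le (k + m) (E - mix_rate * (E - d)).
Proof.
move=> Hkm HE HdE [bg Hbg] c.
have Hgood : deficit m bg < d * lenR m bg.
  have : (s - d) * lenR m bg < lnimg m bg.
    by rewrite /lnimg -(ln_exp ((s - d) * lenR m bg)); apply: ln_increasing => //; exact: exp_pos.
  by rewrite /deficit; lra.
have [r Hr] := img_nonempty k [:: c].
have Hin : bg \in r by apply: mem_img_all_letters Hr.
case/splitPr: r / Hin Hr => r1 r2 Hr.
apply: Rle_trans (deficit_split m Hr) _.
have Hmix : (E - d) * (mix_rate * lenR (k + m) c) <= (E - d) * lenR m bg.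
  by apply: Rmult_le_compat_l; [lra | exact: mix_rate_len_le].
move: Hmix; rewrite (lenR_add _ Hr) !sumR_cat /= => Hmix.
by apply: (mix_step_ineq _ Hgood _ Hmix); rewrite -sumR_scale; exact: sumR_le.
Qed.

Section Expanding.
Variable b0 : A.
Hypothesis len_b0 : (2 <= letter_len 1 b0)%N.

Lemma exists_good_letter d : 0 < d -> d < s -> exists m1, forall m, (m1 <= m)%N ->
  exists b, exp ((s - d) * INR (letter_len m b)) < INR (nimg m [:: b]).
Proof.
move=> Hd Hds.
pose c := ln (INR #|A|.+1).
have Hc : 0 <= c by apply: ln_ge0; rewrite S_INR; have := pos_INR #|A|; lra.
have [a0 Ha0] := INR_archimed 1 (4 * c / d) Rlt_0_1; rewrite Rmult_1_r in Ha0.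
have [m0 Hm0] := letter_len_unbounded len_b0 a0.
exists (maxn k m0) => m; rewrite geq_max => /andP [Hkm Hm0m].
apply: NNPP => Hno.
have Hle b : INR (nimg m [:: b]) <= exp ((s - d) * INR (letter_len m b)).
  by apply: Rnot_lt_le => H; apply: Hno; exists b.
have [bm _ Hmin] := arg_minnP (letter_len m) (erefl (predT b0)).
set a := letter_len m bm in Hmin.
have Ha b : (a <= letter_len m b)%N := Hmin b isT.
have Ha1 : (0 < a)%N by exact: letter_len_gt0.
have HL b : (letter_len m b <= Kp * a)%N by exact: letter_len_ratio.
have H4c : 4 * c < d * INR a.
  have Ha0a : INR a0 <= INR a := INR_leq (Hm0 m bm Hm0m).
  by have := Rlt_mul_of_div_lt Hd Ha0; nra.
have [N0 HN0] := ln_card_lang_gt (ltac:(lra) : 0 < d / 4).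
pose R0 := 3 * INR Kp + 6 * INR Kp / d + 12 * s * INR Kp / d.
have [n Hn] := INR_archimed 1 (Rmax R0 (INR N0)) Rlt_0_1; rewrite Rmult_1_r in Hn.
have HR0 : R0 < INR n by have := Rmax_l R0 (INR N0); lra.
have HN0n : (N0 < n)%N by apply/ltP/INR_lt; have := Rmax_r R0 (INR N0); lra.
pose l := (n * a)%N.
have Hl : (0 < l)%N by rewrite muln_gt0 Ha1 andbT; apply: leq_ltn_trans HN0n.
have Hlow := HN0 l (leq_trans HN0n (leq_pmulr n Ha1)).
have Hcard : 0 < INR (card_lang theta l).
  apply: gt0_of_ln_gt0 (pos_INR _) (Rle_lt_trans _ _ _ _ Hlow).
  by apply: Rmult_le_pos; [lra | exact: pos_INR].
have HJ : (l + 2 * (Kp * a) < (n + 2 * Kp).+1 * a)%N by rewrite /l; nia.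
have HLmax : (0 < Kp * a)%N by rewrite muln_gt0 (Kp_gt0 b0).
have Hup := ln_card_lang_le Hl Ha HL HJ (ltac:(lra) : 0 <= s - d) Hle HLmax Hcard.
apply: (counting_bound_absurd Hd Hds (INR_leq Ha1) (INR_leq (Kp_gt0 b0)) Hc H4c HR0).
move: Hlow Hup; rewrite /l !INR_muln (INR_addn n) (INR_addn (n * a)) !INR_muln [INR 2%N]/= -/c; lra.
Qed.

Lemma deficit_le_eventually d : 0 < d -> d < s -> exists ms, deficit_le ms (2 * d).
Proof.
move=> Hd Hds.
have [m1 Hm1] := exists_good_letter Hd Hds.
pose m0 := maxn k m1.
have HB0 : deficit_le m0 s by move=> b; have := lnimg_ge0 m0 b; rewrite /deficit; lra.
have HK : 1 <= INR Kp by exact: (INR_leq (Kp_gt0 b0)).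
have Hmix : 0 < mix_rate <= 1.
  rewrite /mix_rate; split; first by apply: Rinv_0_lt_compat; nra.
  by rewrite -Rinv_1; apply: Rinv_le_contravar; nra.
have Hit j : deficit_le (m0 + j * k) (d + (1 - mix_rate) ^ j * (s - d)).
  elim: j => [|j IH]; first by rewrite mul0n addn0 /=; apply: deficit_le_weaken HB0 _; lra.
  have Hpow : 0 <= (1 - mix_rate) ^ j by apply: pow_le; lra.
  have Hkm : (k <= m0 + j * k)%N by rewrite (leq_trans (leq_maxl k m1)) // leq_addr.
  have Hm1m : (m1 <= m0 + j * k)%N by rewrite (leq_trans (leq_maxr k m1)) // leq_addr.
  have := deficit_le_mix Hkm IH (ltac:(nra) : d <= d + (1 - mix_rate) ^ j * (s - d)) (Hm1 _ Hm1m).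
  rewrite mulSn addnCA => H; apply: deficit_le_weaken H _.
  by rewrite /=; nra.
have Hab : Rabs (1 - mix_rate) < 1 by rewrite Rabs_right; lra.
have [J HJ] := pow_lt_1_zero (1 - mix_rate) Hab (d / (s - d)) ltac:(apply: Rdiv_lt_0_compat; lra).
have := HJ J (Nat.le_refl J); rewrite Rabs_right; last by apply/Rle_ge/pow_le; lra.
move=> HJJ; exists (m0 + J * k)%N; apply: deficit_le_weaken (Hit J) _.
have := Rmult_lt_compat_r (s - d) _ _ ltac:(lra) HJJ.
by rewrite /Rdiv Rmult_assoc Rinv_l; lra.
Qed.

End Expanding.


Section PeriodicWords.
Variable v : seq A.
Hypothesis v_gt0 : (0 < size v)%N.
Hypothesis v_periodic : forall N, in_lang theta (wpow v N).

Lemma nimg_le_card_periodic m : (nimg m v <= card_periodic theta (word_len m v))%N.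
Proof.
pose Q := word_len m v.
pose L := pmap (insub : seq A -> option (Q.-tuple A)) (undup (img m v)).
have -> : nimg m v = size L.
  rewrite /L size_pmap_sub /nimg -(count_predT (undup (img m v))).
  by apply: eq_in_count => z; rewrite mem_undup => /size_img ->; rewrite eqxx.
rewrite /card_periodic cardE; apply: uniq_leq_size.
  by apply: pmap_sub_uniq; exact: undup_uniq.
move=> t; rewrite mem_pmap_sub mem_undup => Ht.
by rewrite mem_enum inE; apply: pbT; exact: periodic_img v_periodic Ht.
Qed.

Lemma periodic_growth_ge m lo : (0 < word_len m v)%N ->
  lo * INR (word_len m v) <= ln (INR (nimg m v)) ->
  exists x, periodic_growth theta (word_len m v) = Some x /\ lo <= x.
Proof.
move=> Hq Hlo.
have HP := nimg_le_card_periodic m.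
have HPpos := leq_trans (nimg_gt0 m v) HP.
exists (ln (INR (card_periodic theta (word_len m v))) / INR (word_len m v)); split.
  by rewrite /periodic_growth; case: eqP => // H; rewrite H in HPpos.
apply: Rle_div_of_mul_le; first exact: INR_gt0.
exact: Rle_trans Hlo (ln_le (nimg_INR_gt0 _ _) (INR_leq HP)).
Qed.

Lemma periodic_growth_frequently_gt eps : 0 < eps -> forall N : nat,
  exists n : nat, (N <= n)%coq_nat /\
    exists x : R, periodic_growth theta n = Some x /\ s - eps < x.
Proof.
move=> He N.
have [b0 len_b0] := exists_expanding_letter v_gt0 v_periodic.
have [m0 Hm0] := letter_len_unbounded len_b0 N.+1.
suff [m [Hm Hlo]] : exists m, (m0 <= m)%N /\
    (s - eps / 2) * INR (word_len m v) <= ln (INR (nimg m v)).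
  have HN : (N < word_len m v)%N.
    case: v v_gt0 => // a r _.
    exact: leq_trans (Hm0 m a Hm) (letter_len_le_word_len m (mem_head a r)).
  have [x [Hx Hlx]] := periodic_growth_ge (leq_ltn_trans (leq0n N) HN) Hlo.
  exists (word_len m v); split; first by apply/leP; exact: ltnW.
  by exists x; split => //; lra.
case: (Rlt_le_dec s (eps / 2)) => Hse.
  exists m0; split => //.
  have := pos_INR (word_len m0 v).
  have : 0 <= ln (INR (nimg m0 v)) by exact/ln_ge0/(INR_leq (nimg_gt0 m0 v)).
  nra.
have [ms Hms] := deficit_le_eventually len_b0 (ltac:(lra) : 0 < eps / 4)
  (ltac:(lra) : eps / 4 < s).
exists (m0 + ms)%N; split; first exact: leq_addr.
apply: Rle_trans (ln_nimg_ge v (deficit_le_add Hms m0)).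
by apply: Rmult_le_compat_r; [exact: pos_INR | lra].
Qed.

End PeriodicWords.
End Entropy.

End Primitive.
End Images.

Theorem mainTheorem15 (A : finType) (theta : rsubst A) (s : R) :
  is_random_substitution theta ->
  primitive_subst theta ->
  semi_compatible theta ->
  Un_cv (fun l : nat => Rdiv (ln (INR (card_lang theta l.+1))) (INR l.+1)) s ->
  (exists q : nat, (0 < q)%N /\ (0 < card_periodic theta q)%N) ->
  is_limsup (periodic_growth theta) s.
Proof.
move=> theta_rs [k [k_gt0 Mk_gt0]] theta_sc entropy_s [q [q_gt0 /card_gt0P [t]]].
rewrite inE => /pbP [_ t_periodic].
split; first exact: periodic_growth_eventually_lt.
have t_gt0 : (0 < size (val t))%N by rewrite size_tuple.
exact: (periodic_growth_frequently_gt theta_rs theta_sc k_gt0 Mk_gt0 entropy_s t_gt0 t_periodic).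
Qed.
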